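(* Let $n\geqslant 2$. Then the semigroup $\mathbf{I}\mathbb{N}_{\infty}^n$ is isomorphic to the semidirect product $\mathscr{S}_n\ltimes_{\mathfrak{h}}(\mathscr{P}_{\infty}(\mathbb{N}^n),\cup)$ of the free semilattice with unit $(\mathscr{P}_{\infty}(\mathbb{N}^n),\cup)$ by the symmetric group $\mathscr{S}_n$, where $\sigma\in\mathscr{S}_n$ acts on a finite set $F\subseteq\mathbb{N}^n$ by $(F)\mathfrak{h}_\sigma=(F)\alpha_\sigma=\{(\mathbf{x})\alpha_\sigma\colon\mathbf{x}\in F\}$. Equivalently, $\mathbf{I}\mathbb{N}_{\infty}^n\cong H(\mathbb{I})\ltimes_{\mathfrak{h}}E(\mathbf{I}\mathbb{N}_{\infty}^n)$ with $(\varepsilon)\mathfrak{h}_\sigma=\sigma^{-1}\varepsilon\sigma$, via $\alpha\mapsto(\sigma_\alpha,\alpha^{-1}\alpha)$, where $\sigma_\alpha$ is the unique unit with $\alpha=\sigma_\alpha\varepsilon$ for some idempotent $\varepsilon$.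
   Context: $\mathbb{N}=\{1,2,3,\ldots\}$, $n\geqslant 2$, and $\mathbb{N}^n$ carries the Euclidean metric $d$. A partial isometry of $\mathbb{N}^n$ is an injective partial map $\alpha\colon\mathbb{N}^n\rightharpoonup\mathbb{N}^n$ with $d((\mathbf{x})\alpha,(\mathbf{y})\alpha)=d(\mathbf{x},\mathbf{y})$ for all $\mathbf{x},\mathbf{y}\in\operatorname{dom}\alpha$; it is cofinite if $\mathbb{N}^n\setminus\operatorname{dom}\alpha$ and $\mathbb{N}^n\setminus\operatorname{ran}\alpha$ are finite. $\mathbf{I}\mathbb{N}_{\infty}^n$ is the monoid of all partial cofinite isometries of $\mathbb{N}^n$ under composition of partial maps written on the right: $\mathbf{x}(\alpha\beta)=(\mathbf{x}\alpha)\beta$. Its identity is the identity map $\mathbb{I}$, $H(\mathbb{I})$ is its group of units and $E(\mathbf{I}\mathbb{N}_{\infty}^n)$ its semilattice of idempotents. $\mathscr{S}_n$ is the group of permutations of $\{1,\ldots,n\}$ acting on the right (composed left to right); for $\sigma\in\mathscr{S}_n$, $\alpha_\sigma$ is the isometry $(x_1,\ldots,x_n)\alpha_\sigma=(y_1,\ldots,y_n)$ with $y_{(i)\sigma}=x_i$. $(\mathscr{P}_{\infty}(X),\cup)$ is the semilattice of all finite subsets of $X$ (including $\emptyset$) under union. For semigroups $A,B$ and a homomorphism $\mathfrak{h}\colon A\to\operatorname{End}(B)$, $a\mapsto\mathfrak{h}_a$ (endomorphisms written on the right, composed left to right), the semidirect product $A\ltimes_{\mathfrak{h}}B$ is $A\times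 B$ with multiplication $(a_1,b_1)(a_2,b_2)=(a_1a_2,(b_1)\mathfrak{h}_{a_2}\,b_2)$. *)

From mathcomp Require Import all_boot all_order all_fingroup.
Set Implicit Arguments. Unset Strict Implicit. Unset Printing Implicit Defensive.

Definition pt (n : nat) := {x : {ffun 'I_n -> nat} | [forall i, 0 < x i]}.

(* Squared Euclidean distance (d(x,y) = d(x',y') iff squared distances agree). *)
Definition sqdist n (x y : pt n) : nat :=
  \sum_(i < n) ((val x i - val y i) + (val y i - val x i)) ^ 2.

Definition pmap n := pt n -> option (pt n).

(* composition written on the right: x (a b) = (x a) b *)
Definition pmcomp n (a b : pmap n) : pmap n := fun x => obind b (a x).

Definition is_pci n (a : pmap n) : Prop :=
  [/\ (forall x y z, a x = Some z -> a y = Some z -> x = y),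
      (forall x y ax ay, a x = Some ax -> a y = Some ay -> sqdist ax ay = sqdist x y),
      (exists s : seq (pt n), forall x, a x = None -> x \in s)
    & (exists s : seq (pt n), forall y, (forall x, a x <> Some y) -> y \in s)].

Definition INinf n := {a : pmap n | is_pci a}.

Definition finPset n := {F : pt n -> Prop | exists s : seq (pt n), forall x, F x -> x \in s}.

Lemma union_fin n (F G : finPset n) :
  exists s : seq (pt n), forall x, (sval F x \/ sval G x) -> x \in s.
Proof.
case: F G => F [s Hs] [G [t Ht]] /=; exists (s ++ t) => x [/Hs|/Ht] h;
  by rewrite mem_cat h ?orbT.
Qed.

Definition funion n (F G : finPset n) : finPset n :=
  exist _ (fun x => sval F x \/ sval G x) (union_fin F G).

(* The isometry alpha_sigma : (x_1..x_n) |-> (y_1..y_n) with y_{(i)sigma} = x_i. *)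
Lemma alpha_pos n (s : 'S_n) (x : pt n) :
  [forall j, 0 < [ffun j => val x ((s^-1)%g j)] j].
Proof.
apply/forallP => j; rewrite ffunE; case: x => x /= /forallP; exact.
Qed.

Definition alpha_s n (s : 'S_n) (x : pt n) : pt n :=
  exist _ [ffun j => val x ((s^-1)%g j)] (alpha_pos s x).

Lemma hact_fin n (s : 'S_n) (F : finPset n) :
  exists l : seq (pt n), forall y, (exists x, sval F x /\ y = alpha_s s x) -> y \in l.
Proof.
case: F => F [l Hl] /=; exists (map (alpha_s s) l) => y [x [Fx ->]].
by apply: map_f; apply: Hl.
Qed.

Definition hact n (s : 'S_n) (F : finPset n) : finPset n :=
  exist _ (fun y => exists x, sval F x /\ y = alpha_s s x) (hact_fin s F).

(* semidirect product S_n |x_h (P_infty(N^n), union):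
   (a1,b1)(a2,b2) = (a1 a2, (b1) h_{a2} U b2);
   mathcomp's product of permutations composes left to right: (s * t) x = t (s x). *)
Definition sd_mul n (p q : 'S_n * finPset n) : 'S_n * finPset n :=
  (p.1 * q.1, funion (hact q.1 p.2) q.2)%g.

(* Far out in the corner of N^n, beyond the finitely many points missing from
   its domain, a cofinite partial isometry a maps the unit steps p -> p + e_i of
   a corner point p to integer steps of length one, i.e. to +-e_(tau i).
   Comparing distances to p and to p + e_i then shows that a acts on its whole
   domain coordinatewise by x_i |-> c_i x_i + const with c_i = +-1.  Positivity
   of the coordinates forces c_i = 1, and cofiniteness of both domain and range
   (for n >= 2) forces the constants to vanish, so a is the restriction of the
   coordinate permutation alpha_s to its domain.  Hence a is determined by s and
   by the finite complement of its range; composing maps multiplies the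
   permutations and sends the range complements F_a, F_b to (F_a)alpha_t U F_b,
   which is the multiplication of the semidirect product. *)

From Pilot Require Import Defs.
From mathcomp Require Import all_boot all_fingroup all_algebra zify ring.
From Stdlib Require Import Classical ClassicalEpsilon ProofIrrelevance.
From Stdlib Require Import FunctionalExtensionality PropExtensionality.
Set Implicit Arguments. Unset Strict Implicit. Unset Printing Implicit Defensive.
Import GRing.Theory Num.Theory.

Section AlphaAction.
Variable n : nat.
Implicit Types (s t : 'S_n) (x y : pt n).

Lemma alpha_sE s x j : val (alpha_s s x) j = val x (s^-1 j)%g.
Proof. by rewrite /= ffunE. Qed.

Lemma alpha_sM s t x : alpha_s (s * t)%g x = alpha_s t (alpha_s s x).
Proof. by apply: val_inj; apply/ffunP => j; rewrite !alpha_sE invMg permM. Qed.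

Lemma alpha_s1 x : alpha_s 1%g x = x.
Proof. by apply: val_inj; apply/ffunP => j; rewrite alpha_sE invg1 perm1. Qed.

Lemma alpha_sK s : cancel (alpha_s s) (alpha_s s^-1).
Proof. by move=> x; rewrite -alpha_sM mulgV alpha_s1. Qed.

Lemma alpha_sKV s : cancel (alpha_s s^-1) (alpha_s s).
Proof. by move=> x; rewrite -alpha_sM mulVg alpha_s1. Qed.

Lemma alpha_s_inj s : injective (alpha_s s).
Proof. exact: can_inj (alpha_sK s). Qed.

Lemma sqdist_alpha_s s x y : sqdist (alpha_s s x) (alpha_s s y) = sqdist x y.
Proof.
rewrite /sqdist (reindex_inj (@perm_inj _ s)) /=.
by apply: eq_bigr => i _; rewrite !alpha_sE permK.
Qed.

Lemma alpha_s_injl x s t :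
  injective (fun i => val x i) -> alpha_s s x = alpha_s t x -> s = t.
Proof.
move=> x_inj /(congr1 val)/ffunP eq_st; apply: invg_inj; apply/permP => j.
by apply: x_inj; move: (eq_st j); rewrite !ffunE.
Qed.

End AlphaAction.

(* a = alpha_s s restricted to dom a, i.e. the factorisation a = sigma_a eps. *)
Definition restricts n (a : Defs.pmap n) (s : 'S_n) :=
  forall x y, a x = Some y -> y = alpha_s s x.


Lemma mkpt_pos n (f : 'I_n -> nat) : [forall i, 0 < [ffun i => (f i).+1] i].
Proof. by apply/forallP => i; rewrite ffunE. Qed.

Definition mkpt n (f : 'I_n -> nat) : pt n :=
  exist (fun x : {ffun 'I_n -> nat} => is_true [forall i, 0 < x i]) _ (mkpt_pos f).

Lemma mkptE n (f : 'I_n -> nat) i : val (mkpt f) i = (f i).+1.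
Proof. by rewrite /= ffunE. Qed.

Lemma pt_gt0 n (x : pt n) i : 0 < val x i.
Proof. by case: x => x /= /forallP. Qed.

Definition max_coord n (l : seq (pt n)) : nat := \max_(x <- l) \max_(i < n) val x i.

Lemma max_coord_notin n (l : seq (pt n)) (x : pt n) i : max_coord l < val x i -> x \notin l.
Proof.
rewrite ltnNge; apply: contra => x_l.
have le_x := @leq_bigmax_seq _ l xpredT (fun x : pt n => \max_(i < n) val x i) x x_l isT.
exact: leq_trans (@leq_bigmax _ (fun i : 'I_n => val x i) i) le_x.
Qed.

Section CofiniteMaps.
Variables (n : nat) (a : Defs.pmap n) (l : seq (pt n)).

Lemma cofinite_dom_some (x : pt n) i :
  (forall x, a x = None -> x \in l) ->
  max_coord l < val x i -> exists y, a x = Some y.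
Proof.
move=> dom_l lt_l; case ax: (a x) => [y|]; first by exists y.
by move: (dom_l x ax); rewrite (negbTE (max_coord_notin lt_l)).
Qed.

Lemma cofinite_ran_onto (y : pt n) i :
  (forall y, (forall x, a x <> Some y) -> y \in l) ->
  max_coord l < val y i -> exists x, a x = Some y.
Proof.
move=> ran_l lt_l; apply: not_all_not_ex => no_pre.
by move: (ran_l y no_pre); rewrite (negbTE (max_coord_notin lt_l)).
Qed.

End CofiniteMaps.
Arguments cofinite_dom_some {n a l} x i.
Arguments cofinite_ran_onto {n a l} y i.

Definition stair n (K : nat) : pt n := mkpt (fun m : 'I_n => K + m).

Lemma stair_inj n K : injective (fun i => val (stair n K) i).
Proof. by move=> i j /=; rewrite !mkptE => -[/addnI /val_inj]. Qed.

Lemma exists_neq_ord n (i : 'I_n) : 1 < n -> exists j : 'I_n, j != i.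
Proof.
move=> n_gt1; pose j0 := Ordinal (ltnW n_gt1); pose j1 := Ordinal n_gt1.
by case: (eqVneq i j0) => [->|]; [exists j1 | exists j0; rewrite eq_sym].
Qed.

Local Open Scope ring_scope.

Definition coordz n (x : pt n) i : int := Posz (val x i).

Lemma sqdistZ n (x y : pt n) :
  (sqdist x y)%:Z = \sum_i (coordz x i - coordz y i) ^+ 2.
Proof.
rewrite /sqdist (big_morph (fun k : nat => Posz k) PoszD (erefl (Posz 0))).
apply: eq_bigr => i _; rewrite /coordz.
set a := val x i; set b := val y i.
have [h|h] : (Posz ((a - b) + (b - a))%N = Posz a - Posz b \/
              Posz ((a - b) + (b - a))%N = Posz b - Posz a) by lia.
- by rewrite -h -natrXE.
- by rewrite -opprB sqrrN -h -natrXE.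
Qed.

Definition kdelta (R : pzSemiRingType) n (k m : 'I_n) : R := (m == k)%:R.

Lemma sqnorm_sub_kdelta (R : comPzRingType) n (d : 'I_n -> R) k (c : R) :
  \sum_m (d m - c * kdelta R k m) ^+ 2 = \sum_m d m ^+ 2 - 2 * c * d k + c ^+ 2.
Proof.
rewrite (bigD1 k) //= [in RHS](bigD1 k) //= /kdelta eqxx mulr1.
rewrite (eq_bigr (fun m => d m ^+ 2)); last by move=> m /negbTE ->; rewrite mulr0 subr0.
ring.
Qed.

Lemma sqnorm_kdelta (R : pzSemiRingType) n (k : 'I_n) : \sum_m (kdelta R k m) ^+ 2 = 1.
Proof.
rewrite (bigD1 k) //= big1 /kdelta ?eqxx ?expr1n ?addr0 // => m /negbTE ->.
by rewrite expr0n.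
Qed.

Lemma sqnorm1_unit n (u : 'I_n -> int) : \sum_m u m ^+ 2 = 1 ->
  exists k, u k ^+ 2 = 1 /\ forall m, u m = u k * kdelta _ k m.
Proof.
move=> norm1.
have [k uk_neq0] : exists k, u k != 0.
  apply/existsP; apply: contraT; rewrite negb_exists => /forallP u0.
  move: norm1; rewrite big1 // => m _; move: (u0 m); rewrite negbK => /eqP ->.
  by rewrite expr0n.
move: norm1; rewrite (bigD1 k) //=.
set rest := \sum_(m | m != k) _ => norm1.
have rest_ge0 : 0 <= rest by apply: sumr_ge0 => m _; exact: sqr_ge0.
have uk_ge1 : 1 <= u k ^+ 2 by move: uk_neq0; rewrite expr2; set z := u k; nia.
have uk1 : u k ^+ 2 = 1 by lia.
have rest0 : rest = 0 by lia.
exists k; split => // m; rewrite /kdelta; case: eqVneq => [-> | neq_mk].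
  by rewrite mulr1.
have /eqP := psumr_eq0P (fun m _ => sqr_ge0 (u m)) rest0 neq_mk.
by rewrite sqrf_eq0 mulr0 => /eqP.
Qed.

Lemma sqnorm_shift_coord n (v w : 'I_n -> int) (c : int) k i :
  c ^+ 2 = 1 -> \sum_m v m ^+ 2 = \sum_m w m ^+ 2 ->
  \sum_m (v m - c * kdelta _ k m) ^+ 2 = \sum_m (w m - kdelta _ i m) ^+ 2 ->
  v k = c * w i.
Proof.
move=> c2 norm_vw.
rewrite -(eq_bigr _ (fun m _ => congr1 (fun z => (w m - z) ^+ 2) (mul1r (kdelta _ i m)))).
rewrite !sqnorm_sub_kdelta norm_vw c2 expr1n mulr1 => /addIr/addrI/eqP.
rewrite eqr_opp -!mulrA (inj_eq (mulfI _)) // => /eqP <-.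
by rewrite mulrA -expr2 c2 mul1r.
Qed.

Section Rigidity.
Variables (n : nat) (a : Defs.pmap n) (dom_out ran_out : seq (pt n)).
Hypothesis n_gt1 : (1 < n)%N.
Hypothesis a_iso : forall x y ax ay,
  a x = Some ax -> a y = Some ay -> sqdist ax ay = sqdist x y.
Hypothesis a_dom : forall x, a x = None -> x \in dom_out.
Hypothesis a_ran : forall y, (forall x, a x <> Some y) -> y \in ran_out.

Local Notation Z := coordz.
Let K := max_coord dom_out.

(* p = (K+1, ..., K+1) and p_ i = p + e_i lie outside the box [1, K]^n that
   contains every point missing from dom a. *)
Let p := mkpt (fun _ : 'I_n => K).
Let p_ i := mkpt (fun j : 'I_n => (K + (j == i))%N).

Let ap := odflt p (a p).
Let b i := odflt p (a (p_ i)).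

Lemma a_corner : a p = Some ap.
Proof.
have [|y a_p] := cofinite_dom_some p (Ordinal (ltnW n_gt1)) a_dom.
  by rewrite mkptE.
by rewrite /ap a_p.
Qed.

Lemma a_corner_shift i : a (p_ i) = Some (b i).
Proof.
have [|y a_pi] := cofinite_dom_some (p_ i) i a_dom; last by rewrite /b a_pi.
by rewrite mkptE eqxx; lia.
Qed.

Lemma a_isoZ x y ax ay : a x = Some ax -> a y = Some ay ->
  \sum_m (Z ax m - Z ay m) ^+ 2 = \sum_m (Z x m - Z y m) ^+ 2.
Proof. by move=> ax_x ay_y; rewrite -!sqdistZ (a_iso ax_x ay_y). Qed.

Lemma corner_shiftZ i m : Z (p_ i) m - Z p m = kdelta _ i m.
Proof. by rewrite /coordz !mkptE /kdelta; case: (m == i) => /=; lia. Qed.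

Let u i m := Z (b i) m - Z ap m.

Lemma u_sqnorm i : \sum_m u i m ^+ 2 = 1.
Proof.
rewrite (a_isoZ (a_corner_shift i) a_corner) -(sqnorm_kdelta _ i).
by apply: eq_bigr => m _; rewrite corner_shiftZ.
Qed.

(* a maps the step p -> p_ i to the step ap -> b i = ap + c i * e_(tau i). *)
Let tau i := odflt i [pick k | u i k != 0].
Let c i := u i (tau i).

Lemma u_unit i : c i ^+ 2 = 1 /\ forall m, u i m = c i * kdelta _ (tau i) m.
Proof.
have [k [uk1 u_k]] := sqnorm1_unit (u_sqnorm i).
rewrite /c; suff -> : tau i = k by [].
rewrite /tau; case: pickP => [k' /= | /(_ k) /= /negbFE /eqP uk0].
  by apply: contra_neq_eq => /negbTE; rewrite u_k /kdelta => ->; rewrite mulr0.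
by move: uk1; rewrite uk0 expr0n.
Qed.

Lemma image_coord x y i : a x = Some y ->
  Z y (tau i) - Z ap (tau i) = c i * (Z x i - Z p i).
Proof.
move=> y_x; have [c2 u_i] := u_unit i.
pose v m := Z y m - Z ap m; pose w m := Z x m - Z p m.
apply: (sqnorm_shift_coord (v := v) (w := w) c2); first exact: a_isoZ y_x a_corner.
have shifted_v m : v m - c i * kdelta _ (tau i) m = Z y m - Z (b i) m.
  by rewrite -u_i /u /v; lia.
have shifted_w m : w m - kdelta _ i m = Z x m - Z (p_ i) m.
  by rewrite -corner_shiftZ /w; lia.
rewrite (eq_bigr _ (fun m _ => congr1 (fun z => z ^+ 2) (shifted_v m))).
rewrite (eq_bigr _ (fun m _ => congr1 (fun z => z ^+ 2) (shifted_w m))).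
exact: a_isoZ y_x (a_corner_shift i).
Qed.

(* A reflection x_i |-> - x_i + const would make coordinates of images of
   points with large x_i nonpositive. *)
Lemma c_eq1 i : c i = 1.
Proof.
have /eqP := (u_unit i).1; rewrite sqrf_eq1 => /orP [/eqP // | /eqP c_neg].
pose N := val ap (tau i).
pose x := mkpt (fun j => if j == i then (K + N)%N else K).
have [|y y_x] := cofinite_dom_some x i a_dom; first by rewrite mkptE eqxx; lia.
have := image_coord i y_x; rewrite c_neg /coordz !mkptE eqxx.
by have := pt_gt0 y (tau i); rewrite -/N; lia.
Qed.

(* Test points with one coordinate equal to 1 and another one large lie in the
   domain, resp. the range; for n = 1 the shifts x |-> x + k are cofinite
   isometries. *)
Lemma ap_tau i : val ap (tau i) = K.+1.
Proof.
apply/eqP; rewrite eqn_leq; apply/andP; split.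
- have [j j_neq] := exists_neq_ord (tau i) n_gt1.
  pose y := mkpt (fun m => if m == tau i then 0%N else max_coord ran_out).
  have [|x y_x] := cofinite_ran_onto y j a_ran; first by rewrite mkptE (negbTE j_neq).
  have := image_coord i y_x; rewrite c_eq1 /coordz !mkptE eqxx.
  by have := pt_gt0 x i; lia.
- have [j j_neq] := exists_neq_ord i n_gt1.
  pose x := mkpt (fun m => if m == i then 0%N else K).
  have [|y y_x] := cofinite_dom_some x j a_dom; first by rewrite mkptE (negbTE j_neq).
  have := image_coord i y_x; rewrite c_eq1 /coordz !mkptE eqxx.
  by have := pt_gt0 y (tau i); lia.
Qed.

Lemma image_coordE x y i : a x = Some y -> val y (tau i) = val x i.
Proof.
move=> y_x; have := image_coord i y_x.
by rewrite c_eq1 /coordz ap_tau mkptE; lia.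
Qed.

Lemma tau_inj : injective tau.
Proof.
have [|y y_x] := cofinite_dom_some (stair n K) (Ordinal (ltnW n_gt1)) a_dom.
  by rewrite mkptE; lia.
move=> i j tau_ij; apply: (@stair_inj n K).
by rewrite -(image_coordE i y_x) -(image_coordE j y_x) tau_ij.
Qed.

Lemma cofinite_isometry_restricts : exists s, restricts a s.
Proof.
exists (perm tau_inj) => x y y_x; apply: val_inj; apply/ffunP => j.
rewrite alpha_sE -(image_coordE _ y_x).
by rewrite -[in LHS](permKV (perm tau_inj) j) permE.
Qed.

End Rigidity.

Local Close Scope ring_scope.

Lemma pci_restricts n (a : Defs.pmap n) : 1 < n -> is_pci a -> exists s, restricts a s.
Proof.
move=> n_gt1 [_ a_iso [dom_out a_dom] [ran_out a_ran]].
exact: cofinite_isometry_restricts n_gt1 a_iso a_dom a_ran.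
Qed.

Lemma pci_restricts_unique n (a : Defs.pmap n) s t : 0 < n -> is_pci a ->
  restricts a s -> restricts a t -> s = t.
Proof.
move=> n_gt0 [_ _ [dom_out a_dom] _] a_s a_t.
pose K := max_coord dom_out.
have [|y y_x] := cofinite_dom_some (stair n K) (Ordinal n_gt0) a_dom.
  by rewrite mkptE; lia.
by apply: (alpha_s_injl (@stair_inj n K)); rewrite -(a_s _ _ y_x) -(a_t _ _ y_x).
Qed.

Lemma pmcompE n (a b : Defs.pmap n) x z :
  pmcomp a b x = Some z <-> exists y, a x = Some y /\ b y = Some z.
Proof.
rewrite /pmcomp; case: (a x) => [y|] /=; last by split => // -[y []].
by split; [exists y | case=> y' [[<-]]].
Qed.

Lemma pmcomp_pci n (a b : Defs.pmap n) : 1 < n ->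
  is_pci a -> is_pci b -> is_pci (pmcomp a b).
Proof.
move=> n_gt1 a_pci b_pci.
have [s a_s] := pci_restricts n_gt1 a_pci; have [t b_t] := pci_restricts n_gt1 b_pci.
case: a_pci => [a_inj a_iso [dom_a a_dom] [ran_a a_ran]].
case: b_pci => [b_inj b_iso [dom_b b_dom] [ran_b b_ran]].
split.
- move=> x y z /pmcompE [u [u_x z_u]] /pmcompE [v [v_y z_v]].
  by apply: (a_inj _ _ u) => //; rewrite (b_inj _ _ _ z_u z_v).
- move=> x y z w /pmcompE [u [u_x z_u]] /pmcompE [v [v_y w_v]].
  by rewrite (b_iso _ _ _ _ z_u w_v) (a_iso _ _ _ _ u_x v_y).
- exists (dom_a ++ map (alpha_s s^-1) dom_b) => x; rewrite mem_cat /pmcomp.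
  case ax: (a x) => [y|] /=; last by rewrite a_dom.
  move=> none_y; apply/orP; right; rewrite -(alpha_sK s x) -(a_s _ _ ax).
  exact/map_f/b_dom.
- exists (ran_b ++ map (alpha_s t) ran_a) => z no_pre; rewrite mem_cat.
  case: (classic (exists y, b y = Some z)) => [[y z_y] | no_pre_b].
  + apply/orP; right; rewrite (b_t _ _ z_y); apply/map_f/a_ran => x y_x.
    by apply: (no_pre x); apply/pmcompE; exists y.
  + by rewrite b_ran // => y z_y; apply: no_pre_b; exists y.
Qed.

Lemma restricts_graph n (a : Defs.pmap n) s : restricts a s ->
  forall x y, a x = Some y <-> y = alpha_s s x /\ ~ (forall x', a x' <> Some y).
Proof.
move=> a_s x y; split=> [y_x | [-> /not_all_not_ex [x' y_x']]].
  by split; [exact: a_s | move/(_ x)].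
by rewrite {1}(alpha_s_inj (a_s _ _ y_x')).
Qed.

Section Isomorphism.
Variables (n : nat) (n_gt1 : 1 < n).
Implicit Types (a b c : INinf n) (F G : finPset n).

Definition perm_of a : 'S_n := epsilon (inhabits 1%g) (restricts (sval a)).

Lemma perm_ofP a : restricts (sval a) (perm_of a).
Proof. exact: epsilon_spec (pci_restricts n_gt1 (proj2_sig a)). Qed.

Lemma ran_compl_fin a :
  exists l : seq (pt n), forall y, (forall x, sval a x <> Some y) -> y \in l.
Proof. by case: (proj2_sig a). Qed.

Definition ran_compl a : finPset n :=
  exist _ (fun y => forall x, sval a x <> Some y) (ran_compl_fin a).

Definition to_sd a : 'S_n * finPset n := (perm_of a, ran_compl a).

Lemma finPset_eq F G : (forall y, sval F y <-> sval G y) -> F = G.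
Proof.
move=> FG; apply: eq_sig_hprop => [? ? ?|]; first exact: proof_irrelevance.
by apply: functional_extensionality => y; apply: propositional_extensionality.
Qed.

Lemma INinf_eq a b : (forall x y, sval a x = Some y <-> sval b x = Some y) -> a = b.
Proof.
move=> ab; apply: eq_sig_hprop => [? ? ?|]; first exact: proof_irrelevance.
apply: functional_extensionality => x.
case ax: (sval a x) => [y|]; first by symmetry; apply/ab.
by case bx: (sval b x) => [y|] //; move/ab: bx; rewrite ax.
Qed.

Lemma to_sd_inj : injective to_sd.
Proof.
move=> a b [perm_ab ran_ab]; apply: INinf_eq => x y.
rewrite (restricts_graph (perm_ofP (a := a))) (restricts_graph (perm_ofP (a := b))).
by rewrite perm_ab (congr1 (fun P => P y) ran_ab).
Qed.

Definition restrict_alpha s F : Defs.pmap n := fun x =>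
  if excluded_middle_informative (sval F (alpha_s s x)) then None
  else Some (alpha_s s x).

Lemma restrict_alphaE s F x y :
  restrict_alpha s F x = Some y <-> y = alpha_s s x /\ ~ sval F y.
Proof.
rewrite /restrict_alpha; case: excluded_middle_informative => Fsx.
  by split=> // -[-> /(_ Fsx)].
by split=> [[<-] | [->]].
Qed.

Lemma restrict_alpha_pre s F y : ~ sval F y ->
  restrict_alpha s F (alpha_s s^-1 y) = Some y.
Proof. by move=> Fy; apply/restrict_alphaE; rewrite alpha_sKV. Qed.

Lemma restrict_alpha_pci s F : is_pci (restrict_alpha s F).
Proof.
have [l F_l] := proj2_sig F; split.
- by move=> x y z /restrict_alphaE [-> _] /restrict_alphaE [/alpha_s_inj].
- move=> x y z w /restrict_alphaE [-> _] /restrict_alphaE [-> _].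
  exact: sqdist_alpha_s.
- exists (map (alpha_s s^-1) l) => x; rewrite /restrict_alpha.
  case: excluded_middle_informative => //= Fsx _.
  by rewrite -(alpha_sK s x); apply/map_f/F_l.
- exists l => y no_pre; apply: F_l; apply: NNPP => Fy.
  exact: no_pre _ (restrict_alpha_pre s Fy).
Qed.

Lemma to_sd_surj q : exists a, to_sd a = q.
Proof.
case: q => s F; exists (exist _ _ (restrict_alpha_pci s F)); congr pair.
  apply: (pci_restricts_unique (ltnW n_gt1) (restrict_alpha_pci s F)).
    exact: (perm_ofP (a := exist _ _ (restrict_alpha_pci s F))).
  by move=> x y /restrict_alphaE [].
apply: finPset_eq => y /=; split=> [no_pre | Fy x /restrict_alphaE [_ //]].
by apply: NNPP => Fy; exact: no_pre _ (restrict_alpha_pre s Fy).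
Qed.

Lemma to_sd_bij : bijective to_sd.
Proof.
pose of_sd q := proj1_sig (constructive_indefinite_description _ (to_sd_surj q)).
have of_sdK : cancel of_sd to_sd.
  by move=> q; rewrite /of_sd; case: constructive_indefinite_description.
by exists of_sd => // a; apply: to_sd_inj; rewrite of_sdK.
Qed.

Lemma perm_of_pmcomp a b c : sval c = pmcomp (sval a) (sval b) ->
  perm_of c = (perm_of a * perm_of b)%g.
Proof.
move=> c_ab.
apply: (pci_restricts_unique (ltnW n_gt1) (proj2_sig c) (perm_ofP (a := c))).
move=> x z; rewrite c_ab => /pmcompE [y [y_x z_y]].
by rewrite alpha_sM -(perm_ofP y_x) -(perm_ofP z_y).
Qed.

Lemma ran_compl_pmcomp a b c : sval c = pmcomp (sval a) (sval b) ->
  ran_compl c = funion (hact (perm_of b) (ran_compl a)) (ran_compl b).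
Proof.
move=> c_ab; apply: finPset_eq => z /=; rewrite c_ab; split.
- move=> no_pre; case: (classic (exists y, sval b y = Some z)) => [[y z_y] | no_pre_b].
  + left; exists y; split; last exact: perm_ofP z_y.
    by move=> x y_x; apply: (no_pre x); apply/pmcompE; exists y.
  + by right => y z_y; apply: no_pre_b; exists y.
- case=> [[y [no_pre_a ->]] | no_pre_b] x /pmcompE [y' [y'_x z_y']].
  + by apply: (no_pre_a x); rewrite y'_x (alpha_s_inj (perm_ofP z_y')).
  + exact: no_pre_b z_y'.
Qed.

Lemma to_sd_morph a b c : sval c = pmcomp (sval a) (sval b) ->
  to_sd c = sd_mul (to_sd a) (to_sd b).
Proof. by move=> c_ab; rewrite /to_sd (perm_of_pmcomp c_ab) (ran_compl_pmcomp c_ab). Qed.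

End Isomorphism.

Theorem theorem4p5 (n : nat) (hn : 2 <= n) :
  (forall a b : INinf n, exists c : INinf n, sval c = pmcomp (sval a) (sval b)) /\
  exists Phi : INinf n -> 'S_n * finPset n,
    bijective Phi /\
    forall a b c : INinf n, sval c = pmcomp (sval a) (sval b) ->
      Phi c = sd_mul (Phi a) (Phi b).
Proof.
split=> [a b | ].
  by exists (exist _ _ (pmcomp_pci hn (proj2_sig a) (proj2_sig b))).
by exists (@to_sd n); split; [exact: to_sd_bij | exact: to_sd_morph].
Qed.
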